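(* Let $A$ be a sesquiad. Every congruence $\mathcal C\ne A\times A$ on $A$ is contained in a prime congruence.
   Context: Rings are commutative with $1$; monoids are commutative with $1$ and a zero $0$, morphisms preserving $0,1$. A sesquiad is a monoid $A$ with an addition: partially defined sums $\sum_jk_ja_j$ ($k\in\mathbb Z^n$, $n\ge2$) coming from an injective monoid morphism $\varphi:A\to R$ into a ring with $\varphi(0)=0$, a sum being defined exactly when $\sum_jk_j\varphi(a_j)\in\varphi(A)$ and then equal to its preimage; sesquiad morphisms are monoid morphisms preserving defined sums. A congruence on $A$ is an equivalence relation $\mathcal C\subset A\times A$ such that the quotient monoid $A/\mathcal C$ admits an addition making the projection $A\to A/\mathcal C$ a sesquiad morphism. A sesquiad $B$ is integral if $1\neq0$ and $bf=cf$ implies $b=c$ or $f=0$. A congruence $\mathcal C$ is prime if $A/\mathcal C$ is integral, i.e. $1\not\sim_{\mathcal C}0$ and $(af,bf)\in\mathcal C$ implies $(a,b)\in\mathcal C$ or $(f,0)\in\mathcal C$. *)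

From HB Require Import structures.
From mathcomp Require Import all_boot all_order all_algebra.
Set Implicit Arguments. Unset Strict Implicit. Unset Printing Implicit Defensive.
Import Order.TTheory GRing.Theory Num.Theory.
Local Open Scope ring_scope.

(* A sesquiad is presented by its underlying commutative monoid
   (A, mul, one, zero) together with an injective monoid morphism
   phi : A -> R into a commutative ring (possibly the zero ring), with
   phi zero = 0.  The (partial) addition of the sesquiad is the one induced
   by phi (see [sesq_sum]). *)
Definition sesquiad_embedding (A : Type) (mul : A -> A -> A) (one zero : A)
    (R : comPzRingType) (phi : A -> R) : Prop :=
  (forall x y z, mul x (mul y z) = mul (mul x y) z) /\
  (forall x y, mul x y = mul y x) /\
  (forall x, mul one x = x) /\
  (forall x, mul zero x = zero) /\
  injective phi /\
  (forall x y, phi (mul x y) = phi x * phi y) /\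
  phi one = 1 /\ phi zero = 0.

(* "sum_j k_j a_j is defined and equals b" for the addition induced by
   phi (n >= 2, k in Z^n). *)
Definition sesq_sum (A : Type) (R : comPzRingType) (phi : A -> R)
    (n : nat) (k : 'I_n -> int) (a : 'I_n -> A) (b : A) : Prop :=
  \sum_(j < n) phi (a j) *~ k j = phi b.

(* C is a congruence on the sesquiad (A, phi): the quotient monoid A/C
   admits an addition (an injective monoid morphism psi : A/C -> R' into a
   commutative ring, psi 0 = 0) making the projection A -> A/C a sesquiad
   morphism.  Without quotient types we express this via f = psi o proj :
   a monoid morphism A -> R' whose kernel pair is exactly C, and which
   carries every defined sum of A to the corresponding (hence defined) sum. *)
Definition sesq_congruence (A : Type) (mul : A -> A -> A) (one zero : A)
    (R : comPzRingType) (phi : A -> R) (C : A -> A -> Prop) : Prop :=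
  [/\ (forall x, C x x),
      (forall x y, C x y -> C y x),
      (forall x y z, C x y -> C y z -> C x z) &
      exists (R' : comPzRingType) (f : A -> R'),
        [/\ (forall x y, C x y <-> f x = f y),
            (forall x y, f (mul x y) = f x * f y),
            f one = 1, f zero = 0 &
            (forall (n : nat) (k : 'I_n -> int) (a : 'I_n -> A) (b : A),
                (2 <= n)%N -> sesq_sum phi k a b -> sesq_sum f k a b)]].

(* C is prime: the quotient A/C is integral. *)
Definition sesq_prime (A : Type) (mul : A -> A -> A) (one zero : A)
    (C : A -> A -> Prop) : Prop :=
  ~ C one zero /\
  (forall a b f, C (mul a f) (mul b f) -> C a b \/ C f zero).

(* A congruence C is the kernel pair of a map f : A -> R' into a commutative
   ring, multiplicative and carrying defined sums to sums; C is not total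
   exactly when R' is nonzero.  By Zorn's lemma R' has a prime ideal M, and
   the kernel pair of A -> R' -> R'/M is a congruence containing C whose
   quotient embeds in the domain R'/M, hence is prime. *)
From HB Require Import structures.
From mathcomp Require Import all_boot all_algebra ring_quotient generic_quotient.
From mathcomp Require Import boolp classical_sets.
Set Implicit Arguments. Unset Strict Implicit. Unset Printing Implicit Defensive.
Import GRing.Theory.
Local Open Scope ring_scope.
Local Open Scope classical_set_scope.
Local Open Scope quotient_scope.

Section KrullPrime.
Variable R : comNzRingType.

(* Ideals not containing 1, except that the empty set is admitted too, so
   that Zorn's lemma also applies to the empty chain. *)
Definition pre_ideal (I : set R) :=
  ~ I 1 /\ forall a u v, I u -> I v -> I (a * u + v).

Lemma pre_ideal0 I u : pre_ideal I -> I u -> I 0.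
Proof. by case=> _ IM Iu; rewrite -(addNr u) -mulN1r; apply: IM. Qed.

Lemma chain_pre_ideal (F : set (set R)) :
  F `<=` pre_ideal -> total_on F subset -> pre_ideal (\bigcup_(I in F) I).
Proof.
move=> Fpre Ftot; split=> [[I FI I1]|a u v [I FI Iu] [J FJ Jv]].
  by case: (Fpre I FI).
have [IJ|JI] := Ftot I J FI FJ.
- by exists J => //; case: (Fpre J FJ) => _; apply; first exact: IJ.
- by exists I => //; case: (Fpre I FI) => _; apply=> //; exact: JI.
Qed.

Lemma maximal_pre_ideal_prime M : pre_ideal M ->
  (forall J, M `<` J -> ~ pre_ideal J) -> forall u v, M (u * v) -> M u \/ M v.
Proof.
move=> [M1 MM] Mmax u v Muv; apply: contrapT => /not_orP[Mu]; apply.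
have M0 : M 0 by apply: (pre_ideal0 (conj M1 MM) Muv).
pose J := [set m + r * u | m in M & r in [set: R]].
have MJ : M `<` J.
  split=> [m Mm|JM]; first by exists m => //; exists 0 => //; rewrite mul0r addr0.
  by apply: Mu; apply: JM; exists 0 => //; exists 1 => //; rewrite add0r mul1r.
have JM : forall a x y, J x -> J y -> J (a * x + y).
  move=> a _ _ [m1 Mm1 [r1 _ <-]] [m2 Mm2 [r2 _ <-]].
  exists (a * m1 + m2); first exact: MM.
  by exists (a * r1 + r2) => //; rewrite mulrDl mulrDr !mulrA addrACA.
have [m Mm [r _ mru1]] : J 1 by apply: contrapT => J1; exact: (Mmax J MJ).
have -> : v = v * m + r * (u * v) by rewrite mulrA [_ * v]mulrC -mulrDr mru1 mulr1.
by apply: (MM) => //; rewrite -[_ * _]addr0; apply: MM.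
Qed.

Lemma exists_prime_ideal : exists M : set R,
  [/\ pre_ideal M, M 0 & forall u v, M (u * v) -> M u \/ M v].
Proof.
have [M [Mpre Mmax]] := Zorn_bigcup chain_pre_ideal.
have pre0 : pre_ideal [set 0].
  split=> [/eqP|a u v -> ->]; [by rewrite oner_eq0 | by rewrite mulr0 addr0].
have M0 : M 0.
  apply: contrapT => nM0; apply: (Mmax [set 0]) => //; split=> [u Mu|/(_ 0 erefl)//].
  by case: nM0; apply: pre_ideal0 Mpre Mu.
by exists M; split=> //; apply: maximal_pre_ideal_prime.
Qed.
End KrullPrime.

Section NonzeroRing.
Variables (R : comPzRingType) (R1 : (1 : R) != 0).

(* [ring_quotient] only quotients nontrivial rings, so [R] is viewed as one. *)
Let nzR : Type := R.
HB.instance Definition _ := GRing.ComPzRing.on nzR.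
HB.instance Definition _ := GRing.PzSemiRing_isNonZero.Build nzR R1.

Let prime_witness := cid (exists_prime_ideal nzR).
Let M : set nzR := sval prime_witness.

Definition chosen_prime : {pred nzR} := fun x => `[< M x >].

Lemma chosen_prime_idealr_closed : idealr_closed chosen_prime.
Proof.
have [[M1 MM] M0 _] := svalP prime_witness.
split; [exact/asboolP | by apply/negP => /asboolP | ].
by move=> a u v /asboolP Mu /asboolP Mv; apply/asboolP; apply: MM.
Qed.

Lemma chosen_prime_prime_closed : prime_idealr_closed chosen_prime.
Proof.
have [_ _ Mprime] := svalP prime_witness.
by move=> u v /asboolP /Mprime [Mu|Mv]; apply/orP; [left|right]; apply/asboolP.
Qed.

HB.instance Definition _ := isIdealr.Build nzR chosen_prime chosen_prime_idealr_closed.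
HB.instance Definition _ := isPrimeIdealrClosed.Build nzR chosen_prime chosen_prime_prime_closed.

Lemma exists_rmorph_domain : exists (D : comNzRingType) (g : {rmorphism R -> D}),
  forall x y : D, x * y = 0 -> x = 0 \/ y = 0.
Proof.
exists {ideal_quot chosen_prime}, (\pi : {rmorphism nzR -> _}).
by move=> x y /Quotient.rquot_IdomainAxiom /orP[] /eqP; [left|right].
Qed.
End NonzeroRing.

Section KernelCongruence.
Variables (A : Type) (mul : A -> A -> A) (one zero : A).
Variables (R : comPzRingType) (phi : A -> R).

Definition sesq_ring_morphism (R' : comPzRingType) (f : A -> R') : Prop :=
  [/\ forall x y, f (mul x y) = f x * f y, f one = 1, f zero = 0 &
      forall n (k : 'I_n -> int) (a : 'I_n -> A) (b : A),
        (2 <= n)%N -> sesq_sum phi k a b -> sesq_sum f k a b].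

Lemma kernel_sesq_congruence (R' : comPzRingType) (f : A -> R') :
  sesq_ring_morphism f -> sesq_congruence mul one zero phi (fun x y => f x = f y).
Proof.
case=> fM f1 f0 fsum; split=> [//|x y ->//|x y z -> ->//|].
by exists R', f.
Qed.

Lemma sesq_ring_morphism_rmorph (R' R'' : comPzRingType) (f : A -> R')
    (g : {rmorphism R' -> R''}) :
  sesq_ring_morphism f -> sesq_ring_morphism (fun x => g (f x)).
Proof.
case=> fM f1 f0 fsum; split=> [x y|||n k a b n2 /(fsum n k a b n2) fab].
- by rewrite fM rmorphM.
- by rewrite f1 rmorph1.
- by rewrite f0 rmorph0.
- rewrite /sesq_sum -fab raddf_sum; by apply: eq_bigr => j _; rewrite raddfMz.
Qed.

Lemma kernel_sesq_prime (D : comNzRingType) (f : A -> D) :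
  (forall x y : D, x * y = 0 -> x = 0 \/ y = 0) ->
  sesq_ring_morphism f -> sesq_prime mul one zero (fun x y => f x = f y).
Proof.
move=> Ddom [fM f1 f0 _]; split=> [|a b c]; first by rewrite f1 f0; exact/eqP/oner_neq0.
rewrite !fM f0 => /eqP; rewrite -subr_eq0 -mulrBl => /eqP /Ddom[/eqP|->]; last by right.
by rewrite subr_eq0 => /eqP; left.
Qed.
End KernelCongruence.

Theorem mainTheorem6 (A : Type) (mul : A -> A -> A) (one zero : A)
    (R : comPzRingType) (phi : A -> R)
    (hA : sesquiad_embedding mul one zero phi)
    (C : A -> A -> Prop)
    (hC : sesq_congruence mul one zero phi C)
    (hCfull : ~ (forall x y : A, C x y)) :
  exists P : A -> A -> Prop,
    [/\ sesq_congruence mul one zero phi P,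
        (forall x y, C x y -> P x y) &
        sesq_prime mul one zero P].
Proof.
case: hC => _ _ _ [R' [f [kerC fM f1 f0 fsum]]].
have f_hom : sesq_ring_morphism mul one zero phi f by [].
have R'1 : (1 : R') != 0.
  apply/eqP => R'0; apply: hCfull => x y; apply/kerC.
  by rewrite -[f x]mul1r -[f y]mul1r R'0 !mul0r.
have [D [g Ddom]] := exists_rmorph_domain R'1.
have gf_hom := sesq_ring_morphism_rmorph g f_hom.
exists (fun x y => g (f x) = g (f y)); split.
- exact: kernel_sesq_congruence.
- by move=> x y /kerC ->.
- exact: kernel_sesq_prime Ddom gf_hom.
Qed.
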